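(* Assume $\mathfrak C_R \subseteq \mathfrak m^2$, and let $S$, $s$, $b_1<\cdots<b_s$ and $i_0$ be as in the context. Then the Herzog–Kunz sequence $\widetilde a_1 < \cdots < \widetilde a_{n+s}$ of $S$ satisfies $\widetilde a_j = a_j$ for $j \le i_0$ and $$\{\widetilde a_{i_0+1}, \ldots, \widetilde a_{n+s}\} = \{a_{i_0+1}, \ldots, a_n, b_1, \ldots, b_s\},$$ and $S = k[[\widetilde x_1, \ldots, \widetilde x_{n+s}]]$ with Herzog–Kunz generators $\widetilde x_j = x_j$ for $j \le i_0$ and $\widetilde x_j = t^{\widetilde a_j}$ for $j > i_0$.
   Context: Let $k$ be an algebraically closed field of characteristic $0$ and let $(R,\mathfrak m)$ be a complete local noetherian domain of dimension $1$ containing $k$ with $R/\mathfrak m = k$; its normalization is $\overline R = k[[t]]$, $R\subseteq k[[t]]$ finite birational. Let $v$ be the $t$-adic valuation; for $A \subseteq k((t))$ let $v(A)=\{v(f): f\in A\setminus\{0\}\}$, and $V(T)=v(T)$ for a ring $T$. The conductor is $\mathfrak C_R=\{x\in\overline R: x\overline R\subseteq R\} = t^{c_R}\overline R$. For any such ring $T$ (with maximal ideal $\mathfrak m_T$), its Herzog–Kunz sequence is $v(\mathfrak m_T)\setminus v(\mathfrak m_T^2)$ listed increasingly, and Herzog–Kunz generators are elements of $T$ having exactly these valuations (they generate $T$ as $k[[\cdot]]$, the image of a power series ring). Let $a_1<\cdots<a_n$ be the Herzog–Kunz sequence of $R$ and $x_1,\ldots,x_n$ Herzog–Kunz generators of $R$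 with $x_1 = t^{a_1}$. Let $S = R[\mathfrak C_R/x_1]$, let $b_1<\cdots<b_s$ be the elements of $\{c_R-a_1, c_R-a_1+1, \ldots, c_R-1\}$ not in $V(R)$ (so $s$ is the reduced type of $R$), and let $i_0 = \max\{i : a_i < c_R - a_1\}$. Known facts (used as given): $S = R[t^{b_1},\ldots,t^{b_s}]$ is again such a ring, $\mathfrak C_S = t^{c_R-a_1}\overline R$ so $c_S = c_R - a_1$, and $\mathrm{edim}(S) = n+s$. *)

From mathcomp Require Import all_boot all_order all_algebra.
Set Implicit Arguments. Unset Strict Implicit. Unset Printing Implicit Defensive.
Import GRing.Theory.
Local Open Scope ring_scope.

Section PS.
Variable k : fieldType.

(* k[[t]] : f n is the coefficient of t^n *)
Definition ps := nat -> k.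
Definition pset := ps -> Prop.
Definition ps0 : ps := fun _ => 0.

Definition ps_const (c : k) : ps := fun n => if n == 0%N then c else 0.
Definition ps_add (f g : ps) : ps := fun n => f n + g n.
Definition ps_mul (f g : ps) : ps := fun n => \sum_(i < n.+1) f i * g (n - i)%N.
Definition ps_pow (f : ps) (e : nat) : ps := iter e (ps_mul f) (ps_const 1).
Definition tpow (a : nat) : ps := fun n => if n == a then 1 else 0.

Definition is_val (f : ps) (n : nat) : Prop :=
  f n <> 0 /\ forall i, (i < n)%N -> f i = 0.
Definition vset (A : pset) : nat -> Prop :=
  fun n => exists f, A f /\ is_val f n.

Definition subalg (T : pset) : Prop :=
  (forall c, T (ps_const c)) /\
  (forall f g, T f -> T g -> T (ps_add f g)) /\
  (forall f g, T f -> T g -> T (ps_mul f g)).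

(* maximal ideal of T (T/m_T = k): elements of T with zero constant term *)
Definition maxid (T : pset) : pset := fun f => T f /\ f 0%N = 0.

Definition idsq (I : pset) : pset := fun f =>
  exists l : seq (ps * ps),
    (forall j, (j < size l)%N ->
       I (nth (ps0, ps0) l j).1 /\ I (nth (ps0, ps0) l j).2) /\
    forall n, f n = \sum_(p <- l) ps_mul p.1 p.2 n.

Definition conductor (T : pset) : pset :=
  fun x => forall y : ps, T (ps_mul x y).

Definition adjoin (R A : pset) : pset := fun f =>
  forall T : pset, subalg T -> (forall g, R g -> T g) -> (forall g, A g -> T g) -> T f.

Definition divset (C : pset) (x : ps) : pset := fun g => C (ps_mul x g).

Definition HKseq (T : pset) (a : seq nat) : Prop :=
  sorted ltn a /\
  forall n, n \in a <-> (vset (maxid T) n /\ ~ vset (idsq (maxid T)) n).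

Definition HKgens (T : pset) (a : seq nat) (x : seq ps) : Prop :=
  size x = size a /\
  forall j, (j < size a)%N -> T (nth ps0 x j) /\ is_val (nth ps0 x j) (nth 0%N a j).

Definition mono (x : seq ps) (alpha : {ffun 'I_(size x) -> nat}) : ps :=
  foldr (fun (i : 'I_(size x)) acc => ps_mul (ps_pow (nth ps0 x i) (alpha i)) acc)
        (ps_const 1) (enum 'I_(size x)).

(* f lies in k[[x_1,...,x_n]], the image of the power series ring
   k[[X_1..X_n]] under X_i |-> x_i (the x_i having zero constant term):
   f = sum_alpha c_alpha x^alpha, where the coefficient of t^N only involves
   the finitely many alpha with all alpha_i <= N. *)
Definition in_ps_image (x : seq ps) (f : ps) : Prop :=
  (forall i, (i < size x)%N -> nth ps0 x i 0%N = 0) /\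
  exists c : {ffun 'I_(size x) -> nat} -> k,
    forall N : nat,
      f N = \sum_(alpha : {ffun 'I_(size x) -> 'I_N.+1})
               c [ffun i => nat_of_ord (alpha i)] *
               @mono x [ffun i => nat_of_ord (alpha i)] N.

End PS.

From HB Require Import structures.
From mathcomp Require Import all_boot all_order all_algebra.
From mathcomp Require Import boolp zify ring.
Import GRing.Theory.
Local Open Scope ring_scope.

Set Implicit Arguments. Unset Strict Implicit. Unset Printing Implicit Defensive.

(* Since C_R = t^{c_R} k[[t]] and x_1 = t^{a_1}, we have C_R / x_1 = t^{c_S} k[[t]]
   with c_S = c_R - a_1, so S = R + t^{c_S} k[[t]].  Every element of m_R has
   valuation at least a_1, and C_R ⊆ m_R^2 forces c_R >= 2 a_1; hence any product
   of two elements of m_S involving the t^{c_S} k[[t]] part lies in C_R ⊆ m_R^2,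
   i.e. m_S^2 = m_R^2.  So v(m_S) \ v(m_S^2) consists of the a_i together with the
   b_j, the new values in [c_S, c_R) which are not valuations of R; the a_i with
   a_i < c_S keep their places.

   That elements of S with these valuations generate S as a complete algebra is an
   instance of a Nakayama argument valid for any subalgebra T of k[[t]] which
   contains some t^c k[[t]] (c > 0) and whose m_T^2 contains some t^{c'} k[[t]]:
   reducing the valuation one step at a time, every element of m_T is a linear
   combination of Herzog–Kunz generators modulo m_T^2; iterating, every element of
   T is approximated t-adically by polynomials in the generators whose terms of
   low degree stabilise, and the limits of their coefficients give the power
   series expansion. *)

(* A copy of [ps k] carrying the ring structure; its equality is the classical one. *)
Definition psr (k : fieldType) := nat -> k.
HB.instance Definition _ (k : fieldType) := gen_eqMixin (psr k).
HB.instance Definition _ (k : fieldType) := gen_choiceMixin (psr k).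

Section PowerSeriesRingAxioms.
Variable k : fieldType.

Lemma ps_addA : associative (@ps_add k).
Proof. by move=> f g h; apply: funext => n; rewrite /ps_add addrA. Qed.

Lemma ps_addC : commutative (@ps_add k).
Proof. by move=> f g; apply: funext => n; rewrite /ps_add addrC. Qed.

Lemma ps_add0 : left_id (@ps0 k) (@ps_add k).
Proof. by move=> f; apply: funext => n; rewrite /ps_add /ps0 add0r. Qed.

Lemma ps_addN : left_inverse (@ps0 k) (fun f n => - f n) (@ps_add k).
Proof. by move=> f; apply: funext => n; rewrite /ps_add /ps0 addNr. Qed.

(* The ring laws of the Cauchy product are read off from those of [{poly k}]: the
   coefficients of [f * g] up to [n] only depend on the truncations at [n]. *)
Definition ps_trunc (f : ps k) n : {poly k} := \poly_(i < n.+1) f i.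

Lemma ps_mul_coef_trunc (f g : ps k) n m : (m <= n)%N ->
  ps_mul f g m = (ps_trunc f n * ps_trunc g n)`_m.
Proof.
move=> le_mn; rewrite coefM /ps_mul; apply: eq_bigr => [[i lt_im]] _ /=.
rewrite /ps_trunc !coef_poly ifT; last by rewrite ltnS (leq_trans _ le_mn) // -ltnS.
by rewrite ifT // ltnS (leq_trans _ le_mn) // leq_subr.
Qed.

Lemma coefM_congr (p p' q q' : {poly k}) n :
  (forall i, (i <= n)%N -> p`_i = p'`_i) -> (forall i, (i <= n)%N -> q`_i = q'`_i) ->
  (p * q)`_n = (p' * q')`_n.
Proof.
move=> epp' eqq'; rewrite !coefM; apply: eq_bigr => [[i lt_in]] _ /=.
by rewrite epp' -1?ltnS // eqq' // leq_subr.
Qed.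

Lemma coef_ps_truncM (f g : ps k) n i : (i <= n)%N ->
  (ps_trunc (ps_mul f g) n)`_i = (ps_trunc f n * ps_trunc g n)`_i.
Proof. by move=> le_in; rewrite /ps_trunc coef_poly ltnS le_in (ps_mul_coef_trunc _ _ le_in). Qed.

Lemma ps_mulA : associative (@ps_mul k).
Proof.
move=> f g h; apply: funext => n; rewrite !(ps_mul_coef_trunc _ _ (leqnn n)).
transitivity ((ps_trunc f n * ps_trunc g n * ps_trunc h n)`_n); last first.
  by apply: coefM_congr => // i le_in; rewrite coef_ps_truncM.
by rewrite -mulrA; apply: coefM_congr => // i le_in; rewrite coef_ps_truncM.
Qed.

Lemma ps_mulC : commutative (@ps_mul k).
Proof. by move=> f g; apply: funext => n; rewrite !(ps_mul_coef_trunc _ _ (leqnn n)) mulrC. Qed.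

Lemma ps_mul1 : left_id (ps_const (1 : k)) (@ps_mul k).
Proof.
move=> f; apply: funext => n; rewrite /ps_mul big_ord_recl /= /ps_const /= mul1r subn0.
by rewrite big1 ?addr0 // => i _; rewrite mul0r.
Qed.

Lemma ps_mulDl : left_distributive (@ps_mul k) (@ps_add k).
Proof.
move=> f g h; apply: funext => n; rewrite /ps_mul /ps_add -big_split /=.
by apply: eq_bigr => i _; rewrite mulrDl.
Qed.

Lemma ps_const1_neq0 : (ps_const (1 : k) : psr k) != ps0 k.
Proof.
by apply/eqP => /(congr1 (fun f : psr k => f 0%N)); rewrite /ps_const /ps0 /=; apply/eqP/oner_neq0.
Qed.

End PowerSeriesRingAxioms.

HB.instance Definition _ (k : fieldType) := GRing.isZmodule.Build (psr k)
  (@ps_addA k) (@ps_addC k) (@ps_add0 k) (@ps_addN k).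
HB.instance Definition _ (k : fieldType) := GRing.Zmodule_isComNzRing.Build (psr k)
  (@ps_mulA k) (@ps_mulC k) (@ps_mul1 k) (@ps_mulDl k) (@ps_const1_neq0 k).

Section PowerSeries.
Variable k : fieldType.
Implicit Types (f g h : psr k).

Definition psC (c : k) : psr k := ps_const c.
Definition psXn (j : nat) : psr k := tpow k j.

Lemma ps_coefD f g n : (f + g) n = f n + g n. Proof. by []. Qed.
Lemma ps_coefB f g n : (f - g) n = f n - g n. Proof. by []. Qed.
Lemma ps_coefM f g n : (f * g) n = \sum_(i < n.+1) f i * g (n - i)%N. Proof. by []. Qed.
Lemma ps_addE f g : ps_add f g = f + g. Proof. by []. Qed.
Lemma ps_mulE f g : ps_mul f g = f * g. Proof. by []. Qed.

Lemma ps_coef_sum (I : Type) (r : seq I) (P : pred I) (F : I -> psr k) n :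
  (\sum_(i <- r | P i) F i) n = \sum_(i <- r | P i) F i n.
Proof. by elim/big_rec2: _ => // i y1 y2 _ <-. Qed.

Lemma ps_coefCM c f n : (psC c * f) n = c * f n.
Proof.
rewrite ps_coefM big_ord_recl /= /psC /ps_const /= subn0 big1 ?addr0 // => i _.
by rewrite mul0r.
Qed.

Lemma psC0 : psC 0 = 0.
Proof. by apply: funext => n; rewrite /psC /ps_const; case: eqP. Qed.

Lemma psCM a b : psC (a * b) = psC a * psC b.
Proof. by apply: funext => n; rewrite ps_coefCM /psC /ps_const; case: eqP; rewrite ?mulr0. Qed.

(* [t^N] divides [f].  Lemmas concluding [tdvd N f] get a trailing implicit index,
   as [tdvd] unfolds to a product. *)
Definition tdvd (N : nat) f := forall i, (i < N)%N -> f i = 0.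

Lemma tdvd0n f : tdvd 0 f. Proof. by []. Qed.
Lemma tdvdn0 N : tdvd N 0. Proof. by []. Qed.

Lemma tdvdD N f g : tdvd N f -> tdvd N g -> tdvd N (f + g).
Proof. by move=> df dg i lt_iN; rewrite ps_coefD df // dg // addr0. Qed.

Lemma tdvdW M N f : (M <= N)%N -> tdvd N f -> tdvd M f.
Proof. by move=> le_MN df i lt_iM; apply: df; apply: leq_trans le_MN. Qed.

Lemma tdvdM M N f g : tdvd M f -> tdvd N g -> tdvd (M + N) (f * g).
Proof.
move=> df dg i lt_i; rewrite ps_coefM big1 // => [[j lt_ji]] _ /=.
by case: (ltnP j M) => [lt_jM|le_Mj]; [rewrite df ?mul0r | rewrite dg ?mulr0 //; lia].
Qed.

Lemma tdvdMl N f g : tdvd N g -> tdvd N (f * g).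
Proof. by move=> dg; rewrite -(add0n N); apply: tdvdM. Qed.

Lemma tdvdMr N f g : tdvd N f -> tdvd N (f * g).
Proof. by move=> df; rewrite mulrC; apply: tdvdMl. Qed.

Lemma tdvd_sum (I : Type) (r : seq I) (P : pred I) (F : I -> psr k) N :
  (forall i, P i -> tdvd N (F i)) -> tdvd N (\sum_(i <- r | P i) F i).
Proof. by move=> dF; elim/big_rec: _ => // i y Pi dy; apply: tdvdD => //; apply: dF. Qed.

Lemma tdvd_prod (I : Type) (r : seq I) (F : I -> psr k) (d : I -> nat) :
  (forall i, tdvd (d i) (F i)) -> tdvd (\sum_(i <- r) d i) (\prod_(i <- r) F i).
Proof.
move=> dF; elim: r => [|i r IHr]; first by rewrite !big_nil.
by rewrite !big_cons; apply: tdvdM.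
Qed.

Lemma tdvdX N f e : tdvd N f -> tdvd (N * e) (f ^+ e).
Proof.
move=> df; elim: e => [|e IHe]; first by rewrite muln0.
by rewrite exprS mulnS; apply: tdvdM.
Qed.

Lemma tdvd_or_val f N : tdvd N f \/ exists2 v, (v < N)%N & is_val f v.
Proof.
elim: N => [|N [dN|[v lt_vN fv]]]; first by left.
- have [fN0|fN_neq0] := eqVneq (f N) 0; last by right; exists N; [|split; [apply/eqP|]].
  by left => i; rewrite ltnS leq_eqVlt => /orP [/eqP ->|/dN].
- by right; exists v => //; apply: ltnW.
Qed.

Lemma is_val_tdvd f v : is_val f v -> tdvd v f. Proof. by case. Qed.

Lemma psXnM_coef j f n : (psXn j * f) n = if (j <= n)%N then f (n - j)%N else 0.
Proof.
rewrite ps_coefM; case: leqP => [le_jn|lt_nj].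
  rewrite (bigD1 (Ordinal (le_jn : (j < n.+1)%N))) //= /psXn /tpow eqxx mul1r.
  rewrite big1 ?addr0 // => [[i lt_in]] /= neq_ij.
  by rewrite ifN ?mul0r //; apply: contra neq_ij => /eqP eq_ij; apply/eqP/val_inj.
by rewrite big1 // => [[i lt_in]] _ /=; rewrite /psXn /tpow ifN ?mul0r // neq_ltn (leq_trans lt_in).
Qed.

Lemma tdvd_psXn j : tdvd j (psXn j).
Proof. by move=> i lt_ij; rewrite /psXn /tpow ifN // neq_ltn lt_ij. Qed.

Lemma is_val_psXn j : is_val (psXn j) j.
Proof. by split; [rewrite /psXn /tpow eqxx; apply/eqP/oner_neq0 | exact: tdvd_psXn]. Qed.

Definition ps_shift j f : psr k := fun n => f (n + j)%N.

Lemma psXn_shift j f : tdvd j f -> f = psXn j * ps_shift j f.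
Proof.
move=> df; apply: funext => n; rewrite psXnM_coef /ps_shift.
by case: leqP => [le_jn|lt_nj]; [rewrite subnK | rewrite df].
Qed.

Lemma tdvd_shift j N f : tdvd (N + j) f -> tdvd N (ps_shift j f).
Proof. by move=> df i lt_iN; rewrite /ps_shift df // ltn_add2r. Qed.

Lemma ps_powE f e : ps_pow f e = f ^+ e.
Proof. by elim: e => [|e IHe] //=; rewrite exprS -IHe. Qed.

Lemma monoE (x : seq (ps k)) (al : {ffun 'I_(size x) -> nat}) :
  @mono k x al = \prod_(i < size x) ((nth (ps0 k) x i : psr k) ^+ al i).
Proof.
rewrite /mono -big_enum /=.
elim: (enum _) => [|i r IHr]; first by rewrite big_nil.
by rewrite big_cons /= -IHr ps_mulE ps_powE.
Qed.

End PowerSeries.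

Arguments psXn {k} j.

Section Subalgebra.
Variables (k : fieldType) (T : pset k).
Hypothesis Tsub : subalg T.
Implicit Types (f g : psr k).

Lemma subalgC c : T (psC c). Proof. by case: Tsub. Qed.
Lemma subalgD f g : T f -> T g -> T (f + g). Proof. by case: Tsub => _ [+ _]; apply. Qed.
Lemma subalgM f g : T f -> T g -> T (f * g). Proof. by case: Tsub => _ [_]; apply. Qed.
Lemma subalg1 : T (1 : psr k). Proof. exact: (subalgC 1). Qed.
Lemma subalg0 : T (0 : psr k). Proof. by rewrite -psC0; apply: subalgC. Qed.

Lemma subalgB f g : T f -> T g -> T (f - g).
Proof.
move=> Tf Tg; apply: subalgD => //; have -> : - g = psC (-1) * g.
  by apply: funext => n; rewrite ps_coefCM mulN1r.
by apply: subalgM => //; apply: subalgC.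
Qed.

Lemma subalg_sum (I : Type) (r : seq I) (P : pred I) (F : I -> psr k) :
  (forall i, P i -> T (F i)) -> T (\sum_(i <- r | P i) F i).
Proof.
by move=> TF; elim/big_rec: _ => [|i y Pi Ty]; [apply: subalg0 | apply: subalgD => //; apply: TF].
Qed.

Lemma subalg_prod (I : Type) (r : seq I) (F : I -> psr k) :
  (forall i, T (F i)) -> T (\prod_(i <- r) F i).
Proof. by move=> TF; elim/big_rec: _ => [|i y _ Ty]; [apply: subalg1 | apply: subalgM]. Qed.

Lemma subalgX f e : T f -> T (f ^+ e).
Proof. by move=> Tf; elim: e => [|e IHe]; [apply: subalg1 | rewrite exprS; apply: subalgM]. Qed.

Lemma maxidCM c f : maxid T f -> maxid T (psC c * f).
Proof.
by case=> Tf f0; split; [apply: subalgM => //; apply: subalgC | rewrite ps_coefCM f0 mulr0].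
Qed.

Lemma maxidD f g : maxid T f -> maxid T g -> maxid T (f + g).
Proof. by case=> Tf f0 [Tg g0]; split; [apply: subalgD | rewrite ps_coefD f0 g0 addr0]. Qed.

Lemma maxidB f g : maxid T f -> maxid T g -> maxid T (f - g).
Proof. by case=> Tf f0 [Tg g0]; split; [apply: subalgB | rewrite ps_coefB f0 g0 subr0]. Qed.

Lemma maxidM f g : maxid T f -> T g -> maxid T (f * g).
Proof. by case=> Tf f0 Tg; split; [apply: subalgM | rewrite ps_coefM big_ord1 f0 mul0r]. Qed.

Lemma maxid_tdvd1 f : maxid T f -> tdvd 1 f.
Proof. by case=> _ f0 i; rewrite ltnS leqn0 => /eqP ->. Qed.

Lemma vset_maxid_gt0 v : vset (maxid T) v -> (0 < v)%N.
Proof. by move=> [f [[_ f0] [fv _]]]; rewrite lt0n; apply/eqP => v0; rewrite v0 in fv. Qed.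

Lemma vset_maxid v : (0 < v)%N -> vset T v -> vset (maxid T) v.
Proof.
move=> v_gt0 [f [Tf [fv f_lt]]]; exists ((f : psr k) - psC (f 0%N)); split.
  split; first by apply: subalgB => //; apply: subalgC.
  by rewrite ps_coefB /psC /ps_const eqxx subrr.
split; first by rewrite ps_coefB /psC /ps_const ifN ?subr0 // -lt0n.
by move=> i lt_iv; rewrite ps_coefB f_lt // f_lt // /psC /ps_const; case: ifP; rewrite subrr.
Qed.

End Subalgebra.

Section IdealSquare.
Variable k : fieldType.
Implicit Types (I J : pset k) (f g : psr k).

Lemma idsqE I f : idsq I f <->
  exists l : seq (ps k * ps k),
    (forall j, (j < size l)%N -> I (nth (ps0 k, ps0 k) l j).1 /\ I (nth (ps0 k, ps0 k) l j).2) /\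
    f = \sum_(p <- l) ((p.1 : psr k) * p.2).
Proof.
split=> [[l [Il ef]]|[l [Il ->]]]; exists l; split => //.
  by apply: funext => n; rewrite ef ps_coef_sum.
by move=> n; rewrite ps_coef_sum.
Qed.

Lemma idsq_ind I (P : psr k -> Prop) :
  P 0 -> (forall g h f, I g -> I h -> P f -> P (g * h + f)) ->
  forall f, idsq I f -> P f.
Proof.
move=> P0 PMD f /idsqE [l [Il ->]]; elim: l Il => [|[g h] l IHl] Il; first by rewrite big_nil.
rewrite big_cons; have [Ig Ih] := Il 0%N isT.
by apply: PMD => //; apply: IHl => j; apply: (Il j.+1).
Qed.

Lemma idsq0 I : idsq I (0 : psr k).
Proof. by apply/idsqE; exists [::]; rewrite big_nil. Qed.

Lemma idsqD I f g : idsq I f -> idsq I g -> idsq I (f + g).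
Proof.
move=> /idsqE [l1 [Il1 ->]] /idsqE [l2 [Il2 ->]]; apply/idsqE; exists (l1 ++ l2).
split; last by rewrite big_cat.
move=> j; rewrite size_cat nth_cat => lt_j.
by case: ltnP => [/Il1|le_l1j] //; apply: Il2; lia.
Qed.

Lemma idsq_mul I f g : I f -> I g -> idsq I (f * g).
Proof.
move=> If Ig; apply/idsqE; exists [:: (f : ps k, g : ps k)].
by split=> [[|j]|]; rewrite ?big_seq1.
Qed.

Lemma idsqS I J f : (forall g, I g -> J g) -> idsq I f -> idsq J f.
Proof. by move=> sIJ [l [Il ef]]; exists l; split=> // j /Il [Ig Ih]; split; apply: sIJ. Qed.

Lemma idsq_tdvd I M f : (forall g, I g -> tdvd M g) -> idsq I f -> tdvd (M + M) f.
Proof.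
move=> dI; apply: idsq_ind => [|g h f' Ig Ih df']; first exact: tdvdn0.
by apply: tdvdD => //; apply: tdvdM; apply: dI.
Qed.

Lemma idsq_maxid T f : subalg T -> idsq (maxid T) f -> maxid T f.
Proof.
move=> Tsub; apply: idsq_ind => [|g h f' mg mh mf'].
  by split; [apply: subalg0 |].
by apply: maxidD => //; apply: maxidM => //; case: mh.
Qed.

Lemma idsqCM T c f : subalg T -> idsq (maxid T) f -> idsq (maxid T) (psC c * f).
Proof.
move=> Tsub; move: f; apply: (idsq_ind (P := fun f => idsq _ (psC c * f))) => [|g h f mg mh IH].
  by rewrite mulr0; apply: idsq0.
by rewrite mulrDr mulrA; apply: idsqD => //; apply: idsq_mul => //; apply: maxidCM.
Qed.

End IdealSquare.

Lemma sorted_ltn_head_leq (s : seq nat) y : sorted ltn s -> y \in s -> (nth 0%N s 0 <= y)%N.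
Proof.
case: s => [//|z s] /= path_s; rewrite in_cons => /orP [/eqP ->//|s_y].
by apply: ltnW; apply: (allP (order_path_min ltn_trans path_s)).
Qed.

Section HerzogKunzBasics.
Variable k : fieldType.
Implicit Types (T A : pset k) (f : psr k).

(* The least valuation [v] of [m_T] is a Herzog–Kunz value, as [m_T^2] lives in
   valuations [>= 2 v > v]. *)
Lemma HKseq_head_tdvd T ts f : HKseq T ts -> maxid T f -> tdvd (nth 0%N ts 0) f.
Proof.
move=> [ts_sorted HK] mf.
suff head_le v : (exists f, maxid T f /\ is_val f v) -> (nth 0%N ts 0 <= v)%N.
  have [//|[v lt_v fv]] := tdvd_or_val f (nth 0%N ts 0).
  by have := head_le v (ex_intro _ f (conj mf fv)); rewrite leqNgt lt_v.
elim/ltn_ind: v => v IHv [g [mg gv]]; rewrite leqNgt; apply/negP => lt_v.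
have v_gt0 : (0 < v)%N by apply: (vset_maxid_gt0 (T := T)); exists g.
have tdvd_maxid h : maxid T h -> tdvd v h.
  move=> mh; have [//|[w lt_wv hw]] := tdvd_or_val h v.
  by have := IHv w lt_wv (ex_intro _ h (conj mh hw)); lia.
have ts_v : v \in ts.
  apply/HK; split; first by exists g.
  move=> [h [sqh [hv_neq0 _]]]; apply: hv_neq0.
  by apply: (idsq_tdvd tdvd_maxid sqh); lia.
by have := sorted_ltn_head_leq ts_sorted ts_v; lia.
Qed.

Lemma subalg_adjoin R A : subalg (adjoin R A).
Proof.
split; [|split].
- by move=> c T Tsub _ _; apply: subalgC.
- by move=> f g Sf Sg T Tsub RT AT; apply: subalgD; [|apply: Sf | apply: Sg].
- by move=> f g Sf Sg T Tsub RT AT; apply: subalgM; [|apply: Sf | apply: Sg].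
Qed.

Definition plus_tdvd R c : pset k := fun f => exists r g : psr k, [/\ R r, tdvd c g & f = r + g].

Lemma subalg_plus_tdvd R c : subalg R -> subalg (plus_tdvd R c).
Proof.
move=> Rsub; split; [|split].
- by move=> a; exists (psC a), 0; rewrite addr0; split=> //; apply: subalgC.
- move=> _ _ [r1 [g1 [Rr1 dg1 ->]]] [r2 [g2 [Rr2 dg2 ->]]].
  exists (r1 + r2), (g1 + g2); split; [exact: subalgD | exact: tdvdD | rewrite ps_addE; ring].
- move=> _ _ [r1 [g1 [Rr1 dg1 ->]]] [r2 [g2 [Rr2 dg2 ->]]].
  exists (r1 * r2), (r1 * g2 + g1 * r2 + g1 * g2).
  split; [exact: subalgM | | rewrite ps_mulE; ring].
  by apply: tdvdD; [apply: tdvdD; [apply: tdvdMl | apply: tdvdMr] | apply: tdvdMr].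
Qed.

End HerzogKunzBasics.

Section Generation.
Variables (k : fieldType) (T : pset k) (xs : seq (ps k)) (ts : seq nat) (csq cT : nat).
Hypothesis Tsub : subalg T.
Hypothesis HKts : HKseq T ts.
Hypothesis HKxs : HKgens T ts xs.
Hypothesis tdvd_idsq : forall f : psr k, tdvd csq f -> idsq (maxid T) f.
Hypothesis cT_gt0 : (0 < cT)%N.
Hypothesis tdvd_subalg : forall f : psr k, tdvd cT f -> T f.

Local Notation m := (size xs).
Implicit Types (al be : {ffun 'I_m -> nat}) (f g : psr k).

Definition gen (i : 'I_m) : psr k := nth (ps0 k) xs i.
Definition monom al : psr k := @mono k xs al.
Definition mdeg al : nat := (\sum_i al i)%N.
Definition addf al be : {ffun 'I_m -> nat} := [ffun i => al i + be i]%N.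
Definition unitf (j : 'I_m) : {ffun 'I_m -> nat} := [ffun i => (i == j) : nat].

(* A polynomial in the generators, as a list of (coefficient, exponent) terms. *)
Local Notation gpoly := (seq (k * {ffun 'I_m -> nat})).
Implicit Types (P Q : gpoly).

Definition peval P : psr k := \sum_(p <- P) psC p.1 * monom p.2.
Definition mdeg_ge d P := forall p, p \in P -> (d <= mdeg p.2)%N.
Definition pmul P Q : gpoly := [seq (p.1 * q.1, addf p.2 q.2) | p <- P, q <- Q].

Lemma is_val_gen i : is_val (gen i) (nth 0%N ts i).
Proof. by case: HKxs => eq_size HK; case: (HK i); rewrite -?eq_size. Qed.

Lemma maxid_gen i : maxid T (gen i).
Proof.
have lt_i : (i < size ts)%N by case: HKxs => <-.
case: HKxs => _ /(_ i lt_i) [Tx _]; split=> //.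
have /(proj2 HKts) [/vset_maxid_gt0 ts_gt0 _] := mem_nth 0%N lt_i.
exact: is_val_tdvd (is_val_gen i) _ ts_gt0.
Qed.

Lemma monomE al : monom al = \prod_(i < m) gen i ^+ al i.
Proof. exact: monoE. Qed.

Lemma subalg_monom al : T (monom al).
Proof.
by rewrite monomE; apply: subalg_prod => // i; apply: subalgX => //; case: (maxid_gen i).
Qed.

Lemma tdvd_monom al : tdvd (mdeg al) (monom al).
Proof.
rewrite monomE /mdeg (eq_bigr (fun i => 1 * al i)%N) => [|i _]; last by rewrite mul1n.
by apply: tdvd_prod => i; apply: tdvdX; apply: maxid_tdvd1 (maxid_gen i).
Qed.

Lemma monomD al be : monom (addf al be) = monom al * monom be.
Proof. by rewrite !monomE -big_split /=; apply: eq_bigr => i _; rewrite ffunE exprD. Qed.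

Lemma mdegD al be : mdeg (addf al be) = (mdeg al + mdeg be)%N.
Proof. by rewrite /mdeg -big_split /=; apply: eq_bigr => i _; rewrite ffunE. Qed.

Lemma monom0 : monom [ffun _ => 0%N] = 1.
Proof. by rewrite monomE big1 // => i _; rewrite ffunE expr0. Qed.

Lemma monom_unit j : monom (unitf j) = gen j.
Proof.
rewrite monomE (bigD1 j) //= ffunE eqxx expr1 big1 ?mulr1 // => i neq_ij.
by rewrite ffunE (negbTE neq_ij) expr0.
Qed.

Lemma mdeg_unit j : mdeg (unitf j) = 1%N.
Proof.
rewrite /mdeg (bigD1 j) //= ffunE eqxx big1 ?addn0 // => i neq_ij.
by rewrite ffunE (negbTE neq_ij).
Qed.

Lemma leq_mdeg al i : (al i <= mdeg al)%N.
Proof. by rewrite /mdeg (bigD1 i) //= leq_addr. Qed.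

Lemma peval_cat P Q : peval (P ++ Q) = peval P + peval Q.
Proof. by rewrite /peval big_cat. Qed.

Lemma pevalM P Q : peval (pmul P Q) = peval P * peval Q.
Proof.
rewrite /peval /pmul big_allpairs_dep mulr_suml; apply: eq_bigr => p _.
rewrite mulr_sumr; apply: eq_bigr => q _ /=.
by rewrite monomD psCM -!mulrA; congr (_ * _); rewrite mulrCA.
Qed.

Lemma subalg_peval P : T (peval P).
Proof.
by apply: subalg_sum => // p _; apply: subalgM => //; [apply: subalgC | apply: subalg_monom].
Qed.

Lemma tdvd_peval d P : mdeg_ge d P -> tdvd d (peval P).
Proof.
move=> dP; rewrite /peval big_seq_cond; apply: tdvd_sum => p /andP [Pp _].
by apply: tdvdMl; apply: (tdvdW (dP p Pp)); apply: tdvd_monom.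
Qed.

Lemma mdeg_geM d1 d2 P Q : mdeg_ge d1 P -> mdeg_ge d2 Q -> mdeg_ge (d1 + d2) (pmul P Q).
Proof.
move=> dP dQ r /allpairsP [[p q] [Pp Qq ->]] /=.
by rewrite mdegD leq_add //; [apply: dP | apply: dQ].
Qed.

Lemma mdeg_ge_cat d P Q : mdeg_ge d P -> mdeg_ge d Q -> mdeg_ge d (P ++ Q).
Proof. by move=> dP dQ p; rewrite mem_cat => /orP [/dP|/dQ]. Qed.

Definition approx N d g := exists P, mdeg_ge d P /\ tdvd N (g - peval P).

Lemma approxD N d g1 g2 : approx N d g1 -> approx N d g2 -> approx N d (g1 + g2).
Proof.
move=> [P1 [dP1 e1]] [P2 [dP2 e2]]; exists (P1 ++ P2); split; first exact: mdeg_ge_cat.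
by rewrite peval_cat opprD addrACA; apply: tdvdD.
Qed.

Lemma approxW N d d' g : (d' <= d)%N -> approx N d g -> approx N d' g.
Proof. by move=> le_d [P [dP eP]]; exists P; split=> // p /dP; apply: leq_trans. Qed.

Lemma approx_peval N d P : mdeg_ge d P -> approx N d (peval P).
Proof. by move=> dP; exists P; rewrite subrr. Qed.

Lemma mul_sub_peval g1 g2 P1 P2 : g1 * g2 - peval (pmul P1 P2) =
  (g1 - peval P1) * g2 + peval P1 * (g2 - peval P2).
Proof. by rewrite pevalM mulrBl mulrBr addrA subrK. Qed.

Lemma approxM N d1 d2 g1 g2 : approx N d1 g1 -> approx N d2 g2 -> approx N (d1 + d2) (g1 * g2).
Proof.
move=> [P1 [dP1 e1]] [P2 [dP2 e2]]; exists (pmul P1 P2); split; first exact: mdeg_geM.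
by rewrite mul_sub_peval; apply: tdvdD; [apply: tdvdMr | apply: tdvdMl].
Qed.

(* Both error terms pick up one more factor t: from [g2], resp. from [peval P1]. *)
Lemma approxMS N d1 d2 g1 g2 : (0 < d1)%N -> tdvd 1 g2 ->
  approx N d1 g1 -> approx N d2 g2 -> approx N.+1 (d1 + d2) (g1 * g2).
Proof.
move=> d1_gt0 dg2 [P1 [dP1 e1]] [P2 [dP2 e2]]; exists (pmul P1 P2); split; first exact: mdeg_geM.
rewrite mul_sub_peval; apply: tdvdD; first by rewrite -addn1; apply: tdvdM.
by rewrite -add1n; apply: tdvdM => //; apply: tdvdW d1_gt0 (tdvd_peval dP1).
Qed.

Lemma maxid_sub_lead g y v : maxid T g -> maxid T y -> tdvd v g -> is_val y v ->
  maxid T (g - psC (g v / y v) * y) /\ tdvd v.+1 (g - psC (g v / y v) * y).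
Proof.
move=> mg my dg [yv_neq0 dy]; split; first by apply: maxidB => //; apply: maxidCM.
move=> i; rewrite ltnS leq_eqVlt ps_coefB ps_coefCM => /orP [/eqP ->|lt_iv].
  by rewrite divfK ?subrr //; apply/eqP.
by rewrite (dg i lt_iv) (dy i lt_iv) mulr0 subr0.
Qed.

Definition lin_mod_sq g :=
  exists P (h : psr k), [/\ mdeg_ge 1 P, idsq (maxid T) h & g = peval P + h].

(* Nakayama: [m_T] is spanned by the generators modulo [m_T^2]; induction on how far
   the valuation is below [csq]. *)
Lemma maxid_lin_mod_sq g : maxid T g -> lin_mod_sq g.
Proof.
suff IH d g' : maxid T g' -> tdvd (csq - d) g' -> lin_mod_sq g'.
  by move=> mg; apply: (IH csq); rewrite ?subnn.
elim: d g' => [|d IHd] g' mg dg.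
  exists [::], g'; rewrite /peval big_nil add0r; split=> //.
  by apply: tdvd_idsq; rewrite -(subn0 csq).
have [|[v lt_v [gv_neq0 dgv]]] := tdvd_or_val g' (csq - d); first exact: IHd.
have le_v : (csq - d <= v.+1)%N.
  by rewrite leqNgt; apply/negP => lt_v'; apply: gv_neq0; apply: dg; lia.
have reduce y : maxid T y -> is_val y v -> lin_mod_sq (g' - psC (g' v / y v) * y).
  move=> my yv; have [mg' dg'] := maxid_sub_lead mg my dgv yv.
  exact: IHd _ mg' (tdvdW le_v dg').
case: (pselect (vset (idsq (maxid T)) v)) => [[y [sqy yv]]|not_sq].
  have [P [h [dP sqh eg]]] := reduce y (idsq_maxid Tsub sqy) yv.
  exists P, (h + psC (g' v / y v) * y); split=> //; first by apply: idsqD => //; apply: idsqCM.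
  by rewrite addrA -eg subrK.
have ts_v : v \in ts by apply/(proj2 HKts); split=> //; exists g'.
have lt_j : (index v ts < m)%N by case: HKxs => ->; rewrite index_mem.
pose j := Ordinal lt_j.
have genv : is_val (gen j) v by have := is_val_gen j; rewrite /= nth_index.
have [P [h [dP sqh eg]]] := reduce _ (maxid_gen j) genv.
exists ((g' v / gen j v, unitf j) :: P), h; split=> //.
  by move=> p; rewrite in_cons => /orP [/eqP -> | /dP]; rewrite ?mdeg_unit.
by rewrite /peval big_cons monom_unit -/(peval P) -addrA -eg addrC subrK.
Qed.

Lemma approx_maxid N g : maxid T g -> approx N 1 g.
Proof.
elim: N g => [|N IHN] g mg; first by exists [::].
have [P [h [dP sqh ->]]] := maxid_lin_mod_sq mg.
apply: approxD; first exact: approx_peval.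
move: h sqh; apply: idsq_ind => [|g1 g2 h mg1 mg2 IHh].
  by exists [::]; rewrite /peval big_nil subr0.
apply: approxD => //; apply: (approxW (isT : (1 <= 1 + 1)%N)).
by apply: approxMS => //; [apply: maxid_tdvd1 mg2 | apply: IHN | apply: IHN].
Qed.

Lemma approx_subalg N f : T f -> approx N 0 f.
Proof.
move=> Tf; have -> : f = psC (f 0%N) * monom [ffun _ => 0%N] + (f - psC (f 0%N)).
  by rewrite monom0 mulr1 addrC subrK.
apply: approxD.
  by have := @approx_peval N 0 [:: (f 0%N, [ffun _ => 0%N])]; rewrite /peval big_seq1; apply.
apply: approxW (approx_maxid _ _) => //; split; first by apply: subalgB => //; apply: subalgC.
by rewrite ps_coefB /psC /ps_const eqxx subrr.
Qed.

Lemma approx_tdvd N d g : (0 < d)%N -> tdvd (d * cT) g -> approx N d g.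
Proof.
elim: d g => [//|d IHd] g _ dg.
have [d0|d_gt0] := posnP d.
  rewrite d0 mul1n in dg *; apply: approx_maxid; split; first exact: tdvd_subalg.
  exact: dg 0%N cT_gt0.
have dgT : tdvd cT g by apply: tdvdW dg; rewrite mulSn leq_addr.
rewrite (psXn_shift dgT) -add1n; apply: approxM.
  by apply: approx_maxid; split; [apply: tdvd_subalg; apply: tdvd_psXn | apply: tdvd_psXn].
by apply: IHd => //; apply: tdvd_shift; rewrite addnC -mulSn.
Qed.

(* [in_ps_image] ranges over exponents bounded by [N]; [emb] forgets the bound. *)
Definition emb B (al : {ffun 'I_m -> 'I_B}) : {ffun 'I_m -> nat} := [ffun i => nat_of_ord (al i)].

Lemma emb_inj B : injective (@emb B).
Proof.
move=> al1 al2 /ffunP e; apply/ffunP => i; apply: val_inj.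
by have := e i; rewrite !ffunE.
Qed.

Lemma sum_emb_pick B be (c : k) :
  \sum_(al : {ffun 'I_m -> 'I_B.+1}) (if be == emb al then c else 0) =
  if [forall i, be i < B.+1]%N then c else 0.
Proof.
case: (boolP [forall i, be i < B.+1]%N) => [/forallP be_lt|not_lt]; last first.
  apply: big1 => al _; case: eqP => // eb; case/negP: not_lt.
  by apply/forallP => i; rewrite eb ffunE.
pose al0 : {ffun 'I_m -> 'I_B.+1} := [ffun i => inord (be i)].
have emb_al0 : emb al0 = be by apply/ffunP => i; rewrite !ffunE inordK.
rewrite -big_mkcond (big_pred1 al0) // => al /=.
by apply/eqP/eqP => [e|->]; [apply: emb_inj; rewrite emb_al0 | rewrite emb_al0].
Qed.

Lemma monom_coef_out be N : ~~ [forall i, be i < N.+1]%N -> monom be N = 0.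
Proof.
move=> /forallPn [i not_lt]; apply: tdvd_monom.
have lt_N : (N < be i)%N by rewrite ltnNge -ltnS.
exact: leq_trans lt_N (leq_mdeg be i).
Qed.

Lemma sum_emb_box B N (G : {ffun 'I_m -> nat} -> k) : (N <= B)%N ->
  (forall be, G be != 0 -> forall i, (be i <= N)%N) ->
  \sum_(al : {ffun 'I_m -> 'I_B.+1}) G (emb al) = \sum_(al : {ffun 'I_m -> 'I_N.+1}) G (emb al).
Proof.
move=> le_NB G_supp.
transitivity (\sum_(al : {ffun 'I_m -> 'I_B.+1}) \sum_(al' : {ffun 'I_m -> 'I_N.+1})
    (if emb al == emb al' then G (emb al) else 0)).
  apply: eq_bigr => al _; rewrite sum_emb_pick; case: ifP => // /negP not_lt.
  have [//|/G_supp supp] := eqVneq (G (emb al)) 0; case: not_lt; apply/forallP => i.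
  by rewrite ltnS supp.
rewrite exchange_big /=; apply: eq_bigr => al' _.
transitivity (\sum_(al : {ffun 'I_m -> 'I_B.+1}) (if emb al' == emb al then G (emb al') else 0)).
  by apply: eq_bigr => al _; rewrite eq_sym; case: eqP => [->|].
rewrite sum_emb_pick ifT //; apply/forallP => i; rewrite ffunE.
by apply: leq_trans (ltn_ord (al' i)) _; rewrite ltnS.
Qed.

(* Below [t^cT] only exponents in the box [[0, cT)^m] contribute, and these give a
   polynomial [Q] in the generators; the rest lies in [t^cT k[[t]] ⊆ T]. *)
Lemma ps_image_subalg f : in_ps_image xs f -> T f.
Proof.
case=> _ [c fE]; have [B eB] : exists B, cT = B.+1 by exists cT.-1; rewrite prednK.
pose Q := \sum_(al : {ffun 'I_m -> 'I_B.+1}) psC (c (emb al)) * monom (emb al).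
have -> : f = Q + (f - Q) by rewrite addrC subrK.
apply: subalgD => //.
  by apply: subalg_sum => // al _; apply: subalgM => //; [apply: subalgC | apply: subalg_monom].
have QN N : Q N = \sum_(al : {ffun 'I_m -> 'I_B.+1}) c (emb al) * monom (emb al) N.
  by rewrite /Q ps_coef_sum; apply: eq_bigr => al _; rewrite ps_coefCM.
apply: tdvd_subalg => N lt_N; rewrite ps_coefB fE QN.
rewrite (@sum_emb_box B N (fun be => c be * monom be N)) ?subrr // => [|be].
  by rewrite -ltnS -eB.
case: (boolP [forall i, be i < N.+1]%N) => [/forallP lt_be _ i|not_lt]; first exact: lt_be.
by rewrite monom_coef_out ?mulr0 ?eqxx.
Qed.

Definition pcoef P be : k := \sum_(p <- P | p.2 == be) p.1.

Lemma pcoef_cat P Q be : pcoef (P ++ Q) be = pcoef P be + pcoef Q be.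
Proof. by rewrite /pcoef big_cat. Qed.

Lemma pcoef_mdeg_lt d P be : mdeg_ge d P -> (mdeg be < d)%N -> pcoef P be = 0.
Proof.
move=> dP lt_d; rewrite /pcoef big_seq_cond big1 // => p /andP [Pp /eqP e].
by have := dP p Pp; rewrite e leqNgt lt_d.
Qed.

Lemma peval_coef_box P N :
  peval P N = \sum_(al : {ffun 'I_m -> 'I_N.+1}) pcoef P (emb al) * monom (emb al) N.
Proof.
rewrite /peval ps_coef_sum.
transitivity (\sum_(p <- P) \sum_(al : {ffun 'I_m -> 'I_N.+1})
    (if p.2 == emb al then p.1 * monom p.2 N else 0)).
  apply: eq_bigr => p _; rewrite sum_emb_pick ps_coefCM; case: ifP => // /negbT out.
  by rewrite monom_coef_out // mulr0.
rewrite exchange_big /=; apply: eq_bigr => al _.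
rewrite /pcoef mulr_suml [RHS]big_mkcond /=; apply: eq_bigr => p _.
by case: (eqVneq p.2 (emb al)) => [->|].
Qed.

Section Expansion.
Variable f : psr k.
Hypothesis Tf : T f.

Lemma approx_step N P : exists Q,
  tdvd N (f - peval P) -> mdeg_ge (N %/ cT) Q /\ tdvd N.+1 (f - peval P - peval Q).
Proof.
case: (pselect (tdvd N (f - peval P))) => dN; last by exists [::].
have TfP : T (f - peval P) by apply: subalgB => //; apply: subalg_peval.
have [d0|d_gt0] := posnP (N %/ cT).
  by have [Q [dQ eQ]] := approx_subalg N.+1 TfP; exists Q; rewrite d0.
have [Q [dQ eQ]] := approx_tdvd N.+1 d_gt0 (tdvdW (leq_divM N cT) dN).
by exists Q.
Qed.

Definition step_poly N P := proj1_sig (cid (approx_step N P)).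

Fixpoint approx_seq N : gpoly :=
  if N is N'.+1 then approx_seq N' ++ step_poly N' (approx_seq N') else [::].

Lemma approx_seqS N : approx_seq N.+1 = approx_seq N ++ step_poly N (approx_seq N).
Proof. by []. Qed.

Lemma step_polyP N : tdvd N (f - peval (approx_seq N)) ->
  mdeg_ge (N %/ cT) (step_poly N (approx_seq N)) /\ tdvd N.+1 (f - peval (approx_seq N.+1)).
Proof.
rewrite approx_seqS peval_cat opprD addrA /step_poly.
by case: (cid (approx_step _ _)) => Q /= HQ /HQ.
Qed.

Lemma tdvd_approx_seq N : tdvd N (f - peval (approx_seq N)).
Proof. by elim: N => [|N IH]; [apply: tdvd0n | case: (step_polyP IH)]. Qed.

Definition limit_coef be := pcoef (approx_seq ((mdeg be).+1 * cT)) be.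

(* Terms added after step [(mdeg be + 1) cT] have degree above [mdeg be]. *)
Lemma pcoef_approx_seq be N : ((mdeg be).+1 * cT <= N)%N ->
  pcoef (approx_seq N) be = limit_coef be.
Proof.
rewrite /limit_coef; set N0 := ((mdeg be).+1 * cT)%N => le_N; rewrite -(subnKC le_N).
elim: (N - N0)%N => [|d IHd]; first by rewrite addn0.
rewrite addnS approx_seqS pcoef_cat IHd [pcoef (step_poly _ _) be](@pcoef_mdeg_lt ((N0 + d) %/ cT)).
- by rewrite addr0.
- by case: (step_polyP (@tdvd_approx_seq (N0 + d))).
- by apply: leq_trans (leq_div2r cT (leq_addr d _)); rewrite mulnK.
Qed.

Lemma subalg_ps_image : in_ps_image xs f.
Proof.
split; first by move=> i lt_i; apply: maxid_tdvd1 (maxid_gen (Ordinal lt_i)) _ _.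
exists limit_coef => N; pose M := (N.+1 * cT + N.+1)%N.
have -> : f N = peval (approx_seq M) N.
  by apply/eqP; rewrite -subr_eq0 -ps_coefB; apply/eqP; apply: tdvd_approx_seq; rewrite ltn_addl.
rewrite peval_coef_box; apply: eq_bigr => al _.
change (pcoef (approx_seq M) (emb al) * monom (emb al) N = limit_coef (emb al) * monom (emb al) N).
have [le_N|lt_N] := leqP (mdeg (emb al)) N; last by rewrite (@tdvd_monom (emb al) N lt_N) !mulr0.
rewrite pcoef_approx_seq //; apply: leq_trans (leq_addr _ _).
by rewrite leq_mul2r ltnS le_N orbT.
Qed.

End Expansion.

Lemma subalg_ps_imageE f : T f <-> in_ps_image xs f.
Proof. by split; [apply: subalg_ps_image | apply: ps_image_subalg]. Qed.

End Generation.

Section Blowup.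
Variables (k : fieldType) (R : pset k) (cR : nat) (a : seq nat) (x : seq (ps k)) (b : seq nat).
Hypothesis Rsub : subalg R.
Hypothesis conductorE : forall f, conductor R f <-> tdvd cR f.
Hypothesis HKa : HKseq R a.
Hypothesis HKx : HKgens R a x.
Hypothesis x1E : forall n, nth (ps0 k) x 0 n = tpow k (nth 0%N a 0) n.
Hypothesis conductor_idsq : forall f, conductor R f -> idsq (maxid R) f.
Hypothesis b_sorted : sorted ltn b.
Hypothesis bP : forall m, m \in b <->
  ((cR - nth 0%N a 0 <= m)%N /\ (m <= cR - 1)%N /\ ~ vset R m).

Local Notation a1 := (nth 0%N a 0).
Local Notation cS := (cR - a1)%N.
Local Notation S := (adjoin R (divset (conductor R) (nth (ps0 k) x 0))).
Implicit Types (f g : psr k).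

Lemma tdvd_idsqR f : tdvd cR f -> idsq (maxid R) f.
Proof. by move=> df; apply/conductor_idsq/conductorE. Qed.

Lemma a1_gt0 : (0 < a1)%N.
Proof.
have size_a : (0 < size a)%N.
  case: HKx => size_x _; rewrite lt0n; apply/eqP => a0.
  have := x1E 0; rewrite (size0nil a0) (size0nil (etrans size_x a0)) /= /ps0 /tpow /=.
  by move=> /eqP; rewrite eq_sym oner_eq0.
by have /(proj2 HKa) [/vset_maxid_gt0 ->] := mem_nth 0%N size_a.
Qed.

Lemma tdvd_a1_maxid f : maxid R f -> tdvd a1 f.
Proof. exact: HKseq_head_tdvd. Qed.

(* [t^{c_R}] lies in [m_R^2], whose valuations are at least [2 a_1]. *)
Lemma leq_a1_double_cR : (a1 + a1 <= cR)%N.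
Proof.
rewrite leqNgt; apply/negP => lt_cR.
have := idsq_tdvd tdvd_a1_maxid (tdvd_idsqR (@tdvd_psXn k cR)) lt_cR.
by rewrite /psXn /tpow eqxx; apply/eqP/oner_neq0.
Qed.

Lemma cS_gt0 : (0 < cS)%N.
Proof. by have := leq_a1_double_cR; have := a1_gt0; lia. Qed.

Lemma conductor_div_x1E g : divset (conductor R) (nth (ps0 k) x 0) g <-> tdvd cS g.
Proof.
have x1M g' n : ps_mul (nth (ps0 k) x 0) g' n = if (a1 <= n)%N then g' (n - a1)%N else 0.
  by rewrite -psXnM_coef; congr (_ _ _ n); apply: funext => i; rewrite x1E.
rewrite /divset conductorE; split=> dg i lt_i.
  by have := dg (i + a1)%N; rewrite x1M leq_addl addnK; apply; lia.
by rewrite x1M; case: leqP => // le_i; apply: dg; lia.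
Qed.

Lemma blowupE f : S f <-> plus_tdvd R cS f.
Proof.
split=> [Sf|[r [g [Rr dg ->]]]].
  apply: Sf => [|r Rr|g /conductor_div_x1E dg]; first exact: subalg_plus_tdvd.
    by exists r, 0; rewrite addr0.
  by exists 0, g; rewrite add0r; split=> //; apply: subalg0.
apply: (subalgD (subalg_adjoin _ _)); first by move=> T _ RT _; apply: RT.
by move=> T _ _ AT; apply/AT/conductor_div_x1E.
Qed.

Lemma blowup_R f : R f -> S f.
Proof. by move=> Rf; apply/blowupE; exists f, 0; rewrite addr0. Qed.

Lemma blowup_tdvd f : tdvd cS f -> S f.
Proof. by move=> df; apply/blowupE; exists 0, f; rewrite add0r; split=> //; apply: subalg0. Qed.

Lemma maxid_blowupE f : maxid S f <-> exists r g : psr k, [/\ maxid R r, tdvd cS g & f = r + g].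
Proof.
split=> [[/blowupE [r [g [Rr dg ef]]] f0]|[r [g [[Rr r0] dg ef]]]].
  by exists r, g; split=> //; split=> //; move: f0; rewrite ef ps_coefD dg ?cS_gt0 // addr0.
have f0 : f 0%N = 0 by rewrite ef ps_coefD r0 dg ?cS_gt0 // addr0.
by split=> //; apply/blowupE; exists r, g.
Qed.

Lemma vset_maxid_blowup v : vset (maxid S) v <-> vset (maxid R) v \/ (cS <= v)%N.
Proof.
split=> [[f [/maxid_blowupE [r [g [mr dg ef]]] [fv_neq0 df]]]|[[f [mf fv]]|le_v]].
- have [le_v|lt_v] := leqP cS v; [by right | left].
  have fr i : (i <= v)%N -> f i = r i by move=> le_iv; rewrite ef ps_coefD dg ?addr0 //; lia.
  exists r; split=> //; split=> [|i lt_iv]; first by rewrite -fr.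
  by rewrite -(fr i (ltnW lt_iv)) df.
- by exists f; split=> //; case: mf => Rf f0; split=> //; apply: blowup_R.
- exists (psXn v); split; last exact: is_val_psXn.
  split; last by apply: tdvd_psXn; apply: leq_trans cS_gt0 le_v.
  by apply: blowup_tdvd; apply: (tdvdW le_v); apply: tdvd_psXn.
Qed.

(* A product of two elements of [m_S] is, up to [m_R^2], in [t^{a_1 + c_S} k[[t]] = C_R]. *)
Lemma idsq_maxid_blowupE f : idsq (maxid S) f <-> idsq (maxid R) f.
Proof.
split; last by apply: idsqS => g [Rg g0]; split=> //; apply: blowup_R.
apply: idsq_ind => [|f1 f2 h]; first exact: idsq0.
move=> /maxid_blowupE [r1 [g1 [m1 d1 ->]]] /maxid_blowupE [r2 [g2 [m2 d2 ->]]] sqh.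
have -> : (r1 + g1) * (r2 + g2) + h = r1 * r2 + (r1 * g2 + g1 * r2 + g1 * g2 + h) by ring.
apply: idsqD; first exact: idsq_mul.
apply: idsqD => //; apply: tdvd_idsqR.
have ecR : cR = (a1 + cS)%N by have := leq_a1_double_cR; lia.
apply: tdvdD; first apply: tdvdD.
- by rewrite ecR; apply: tdvdM => //; apply: tdvd_a1_maxid.
- by rewrite ecR addnC; apply: tdvdM => //; apply: tdvd_a1_maxid.
- by apply: tdvdW (tdvdM d1 d2); have := leq_a1_double_cR; lia.
Qed.

Lemma HK_blowup v : (v \in a) || (v \in b) <-> vset (maxid S) v /\ ~ vset (idsq (maxid S)) v.
Proof.
have sqE : vset (idsq (maxid S)) v <-> vset (idsq (maxid R)) v.
  by split=> [] [f [sqf fv]]; exists f; split=> //; apply/idsq_maxid_blowupE.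
rewrite sqE vset_maxid_blowup; split.
  case/orP => [/(proj2 HKa) [mv not_sq] | /bP [le_v [_ not_R]]]; first by split=> //; left.
  split=> [|[f [sqf fv]]]; first by right.
  by apply: not_R; exists f; split=> //; case: (idsq_maxid Rsub sqf).
move=> [[mv|le_v] not_sq]; first by apply/orP; left; apply/(proj2 HKa).
case: (boolP (v \in a)) => // not_a; apply/orP; right; apply/bP; do 2?split=> //.
  rewrite leqNgt; apply/negP => lt_v; apply: not_sq; exists (psXn v).
  split; last exact: is_val_psXn.
  by apply: tdvd_idsqR; apply: (@tdvdW _ _ v); [lia | apply: tdvd_psXn].
move=> Rv; case/negP: not_a; apply/(proj2 HKa); split=> //.
by apply: vset_maxid => //; apply: leq_trans cS_gt0 le_v.
Qed.

Local Notation i0 := (\max_(i < size a | (nth 0%N a i < cS)%N) i.+1)%N.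

Lemma i0_le_size : (i0 <= size a)%N.
Proof. by apply/bigmax_leqP => i _; apply: ltn_ord. Qed.

Lemma ltn_i0 i : (i < size a)%N -> (i < i0)%N = (nth 0%N a i < cS)%N.
Proof.
move=> lt_i; apply/idP/idP => [lt_i0|lt_cS]; last first.
  exact: (@leq_bigmax_cond _ (fun j : 'I_(size a) => nth 0%N a j < cS)%N
                           (fun j : 'I_(size a) => j.+1) (Ordinal lt_i)).
rewrite ltnNge; apply/negP => le_cS; move: lt_i0; rewrite ltnNge => /negP; apply.
apply/bigmax_leqP => j lt_j; rewrite leqNgt; apply/negP => lt_ij.
have := sorted_leq_nth leq_trans leqnn 0%N (sub_sorted ltnW (proj1 HKa)) i j lt_i (ltn_ord j) lt_ij.
by move: lt_j; lia.
Qed.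

Lemma size_take_i0 : size (take i0 a) = i0.
Proof. by rewrite size_take; case: ltnP => // le_a; apply/eqP; rewrite eqn_leq le_a i0_le_size. Qed.

Lemma mem_take_i0 u : u \in take i0 a -> (u < cS)%N.
Proof.
case/(nthP 0%N) => j; rewrite size_take_i0 => lt_j <-.
by rewrite nth_take // -ltn_i0 //; apply: leq_trans lt_j i0_le_size.
Qed.

Lemma mem_drop_i0 w : w \in drop i0 a ++ b -> (cS <= w)%N.
Proof.
rewrite mem_cat => /orP [|/bP [] //]; case/(nthP 0%N) => j; rewrite size_drop => lt_j <-.
have lt_a : (i0 + j < size a)%N by rewrite -ltn_subRL.
by rewrite nth_drop leqNgt -ltn_i0 // -leqNgt leq_addr.
Qed.

Lemma uniq_drop_i0_cat : uniq (drop i0 a ++ b).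
Proof.
have uniq_a := sorted_uniq ltn_trans ltnn (proj1 HKa).
rewrite cat_uniq drop_uniq // (sorted_uniq ltn_trans ltnn b_sorted) andbT.
apply/hasPn => v b_v; have [_ [_ not_R]] := (bP v).1 b_v.
apply/negP => drop_v; apply: not_R.
have /(proj2 HKa) [[f [[Rf _] fv]] _] : v \in a.
  by rewrite -(cat_take_drop i0 a) mem_cat drop_v orbT.
by exists f.
Qed.

Definition a_tilde := take i0 a ++ sort leq (drop i0 a ++ b).

Lemma mem_a_tilde v : (v \in a_tilde) = (v \in a) || (v \in b).
Proof. by rewrite mem_cat mem_sort mem_cat orbA -mem_cat cat_take_drop. Qed.

Lemma HKseq_blowup : HKseq S a_tilde.
Proof.
split=> [|v]; last by rewrite mem_a_tilde; apply: HK_blowup.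
rewrite /a_tilde (sorted_pairwise ltn_trans) pairwise_cat -!(sorted_pairwise ltn_trans).
rewrite take_sorted ?(proj1 HKa) // ltn_sorted_uniq_leq sort_uniq uniq_drop_i0_cat.
rewrite (sort_sorted leq_total) !andbT; apply/allrelP => u w /mem_take_i0 lt_u.
by rewrite (mem_sort leq) => /mem_drop_i0; apply: leq_trans lt_u.
Qed.

Lemma size_a_tilde : size a_tilde = (size a + size b)%N.
Proof. by rewrite size_cat size_sort size_cat size_drop size_take_i0; have := i0_le_size; lia. Qed.

Lemma take_a_tilde : take i0 a_tilde = take i0 a.
Proof. by rewrite /a_tilde -{1}size_take_i0 take_size_cat. Qed.

Lemma drop_a_tilde : drop i0 a_tilde = sort leq (drop i0 a ++ b).
Proof. by rewrite /a_tilde -{1}size_take_i0 drop_size_cat. Qed.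

Definition x_tilde := [seq (if (j < i0)%N then nth (ps0 k) x j else tpow k (nth 0%N a_tilde j))
                      | j <- iota 0 (size a + size b)].

Lemma HKgens_blowup : HKgens S a_tilde x_tilde.
Proof.
split=> [|j]; first by rewrite size_map size_iota size_a_tilde.
rewrite size_a_tilde => lt_j; rewrite (nth_map 0%N) ?size_iota // nth_iota // add0n.
case: ifP => lt_ji0.
  have lt_ja : (j < size a)%N by apply: leq_trans lt_ji0 i0_le_size.
  rewrite /a_tilde nth_cat size_take_i0 lt_ji0 nth_take //.
  by case: HKx => _ /(_ j lt_ja) [Rx xv]; split=> //; apply: blowup_R.
have le_i0j : (i0 <= j)%N by rewrite leqNgt lt_ji0.
have : nth 0%N a_tilde j \in drop i0 a_tilde.
  by rewrite -[j](subnKC le_i0j) -nth_drop mem_nth // size_drop size_a_tilde; lia.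
rewrite drop_a_tilde mem_sort => /mem_drop_i0 le_cS; split; last exact: is_val_psXn.
by apply: blowup_tdvd; apply: (tdvdW le_cS); apply: tdvd_psXn.
Qed.

Lemma blowup_ps_imageE f : S f <-> in_ps_image x_tilde f.
Proof.
apply: (subalg_ps_imageE (subalg_adjoin _ _) HKseq_blowup HKgens_blowup _ cS_gt0).
- by move=> g /tdvd_idsqR /idsq_maxid_blowupE.
- exact: blowup_tdvd.
Qed.

End Blowup.

Unset Implicit Arguments. Set Strict Implicit.

Theorem mainTheorem11 (k : closedFieldType) (char0 : [pchar k] =i pred0)
  (R : pset k) (cR : nat) (a : seq nat) (x : seq (ps k)) (b : seq nat) :
  (* R is a subring of k[[t]] containing k, with conductor t^cR k[[t]] *)
  subalg R ->
  (forall f, conductor R f <-> (forall i, (i < cR)%N -> f i = 0)) ->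
  (* a_1 < ... < a_n is the Herzog--Kunz sequence of R *)
  HKseq R a ->
  (* x_1..x_n are Herzog--Kunz generators of R with x_1 = t^{a_1} *)
  HKgens R a x ->
  (forall n, nth (ps0 k) x 0 n = tpow k (nth 0%N a 0) n) ->
  (* hypothesis C_R in m^2 *)
  (forall f, conductor R f -> idsq (maxid R) f) ->
  (* b_1 < ... < b_s: elements of [cR - a_1, cR - 1] not in V(R) *)
  sorted ltn b ->
  (forall m, m \in b <->
     ((cR - nth 0%N a 0 <= m)%N /\ (m <= cR - 1)%N /\ ~ vset R m)) ->
  let n := size a in
  let s := size b in
  let S := adjoin R (divset (conductor R) (nth (ps0 k) x 0)) in
  let i0 := (\max_(i < n | (nth 0%N a i < cR - nth 0%N a 0)%N) i.+1)%N in
  exists ta : seq nat,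
    [/\ HKseq S ta, size ta = (n + s)%N,
        take i0 ta = take i0 a,
        drop i0 ta =i drop i0 a ++ b &
        let xt := [seq (if (j < i0)%N then nth (ps0 k) x j else tpow k (nth 0%N ta j))
                  | j <- iota 0 (n + s)] in
        HKgens S ta xt /\ (forall f, S f <-> in_ps_image xt f)].
Proof.
move=> Rsub conductorE HKa HKx x1E conductor_idsq b_sorted bP n s S i0.
exists (a_tilde cR a b); split.
- by apply: HKseq_blowup.
- by apply: size_a_tilde.
- by apply: take_a_tilde.
- by move=> v; rewrite drop_a_tilde // mem_sort.
- by split=> [|f]; [apply: HKgens_blowup | apply: blowup_ps_imageE].
Qed.
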